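(* Let $R$ be a commutative ring in which $2$ is invertible, let $Q$ be a quadratic space over $R$, let $m\ge 1$ and $M=Q\perp\mathbb{H}(R)^m$. Then $\mathrm{EO}_R(Q,\mathbb{H}(R)^m)=\mathrm{ETransO}(M)$.
   Context: A quadratic $R$-module $(Q,q)$ is a finitely generated projective $R$-module with a quadratic form $q$; its bilinear form is $\langle x,y\rangle=q(x+y)-q(x)-q(y)$ (so $\langle x,x\rangle=2q(x)$). It is a quadratic space if $z\mapsto\langle z,-\rangle$ is an isomorphism $Q\to Q^*$. For a finitely generated projective $P$, $\mathbb{H}(P)=P\oplus P^*$ with $q(y,g)=g(y)$, i.e. $\langle(y_1,g_1),(y_2,g_2)\rangle=g_2(y_1)+g_1(y_2)$; orthogonal sums carry the sum of the forms. $\mathbb{H}(R)^m=\mathbb{H}(R^m)$ with basis $x_1,\dots,x_m$ of $R^m$ and dual basis $f_1,\dots,f_m$ ($f_i(x_j)=\delta_{ij}$). DSER transformations on $Q\perp\mathbb{H}(P)$: for $R$-linear $\alpha:Q\to P$, let $\alpha^*:P^*\to Q$ be determined by $\langle\alpha^*(g),z\rangle=g(\alpha(z))$ for all $z\in Q$, and $E_\alpha(z,y,g)=(z-\alpha^*(g),\,y+\alpha(z)-\tfrac12\alpha\alpha^*(g),\,g)$; for $R$-linear $\beta:Q\to P^*$, let $\beta^*:P\to Q$ be determined by $\langle\beta^*(y),z\rangle=\beta(z)(y)$, and $E^*_\beta(z,y,g)=(z-\beta^*(y),\,y,\,g+\beta(z)-\tfrac12\beta\beta^*(y))$. $\mathrm{EO}_R(Q,\mathbb{H}(P))$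 is generated by all $E_\alpha,E^*_\beta$. Elementary orthogonal transvections on $M=Q\perp\mathbb{H}(R)^m$: for $w\in Q$ and $1\le i\le m$, writing elements as $(z,\sum_j a_jx_j+\sum_j b_jf_j)$, set $E^w_{1i}(z,\sum a_jx_j+\sum b_jf_j)=(z-b_iw,\ \sum a_jx_j+(\langle z,w\rangle-b_iq(w))x_i+\sum b_jf_j)$ and $E^w_{2i}(z,\sum a_jx_j+\sum b_jf_j)=(z-a_iw,\ \sum a_jx_j+\sum b_jf_j+(\langle z,w\rangle-a_iq(w))f_i)$. $\mathrm{ETransO}(M)$ is the group generated by all $E^w_{1i},E^w_{2i}$ ($w\in Q$, $1\le i\le m$). *)

From HB Require Import structures.
From mathcomp Require Import all_boot all_order all_algebra.
Set Implicit Arguments. Unset Strict Implicit. Unset Printing Implicit Defensive.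
Import GRing.Theory.
Local Open Scope ring_scope.

Section Defs.
Variable R : comUnitRingType.

Definition is_linear (U V : lmodType R) (f : U -> V) : Prop :=
  forall (a : R) (x y : U), f (a *: x + y) = a *: f x + f y.

Definition is_lfun (U : lmodType R) (f : U -> R) : Prop :=
  forall (a : R) (x y : U), f (a *: x + y) = a * f x + f y.

(* finitely generated projective: a direct summand of some free module R^n *)
Definition fg_projective (U : lmodType R) : Prop :=
  exists (n : nat) (i : U -> 'rV[R]_n) (p : 'rV[R]_n -> U),
    is_linear i /\ is_linear p /\ cancel i p.

Variable Q : lmodType R.

Definition polar (q : Q -> R) (x y : Q) : R := q (x + y) - q x - q y.

Definition is_quadratic_form (q : Q -> R) : Prop :=
  (forall (a : R) (x : Q), q (a *: x) = a ^+ 2 * q x) /\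
  (forall y : Q, is_lfun (fun x => polar q x y)) /\
  (forall x : Q, is_lfun (fun y => polar q x y)).

(* quadratic space: Q f.g. projective, q quadratic form, and z |-> <z,-> is
   an isomorphism Q -> Q^* (injective and surjective onto linear functionals) *)
Definition quadratic_space (q : Q -> R) : Prop :=
  fg_projective Q /\ is_quadratic_form q /\
  (forall z : Q, (forall y : Q, polar q z y = 0) -> z = 0) /\
  (forall f : Q -> R, is_lfun f -> exists z : Q, forall y : Q, polar q z y = f y).

Variable m : nat.

(* M = Q _|_ H(R)^m, elements (z, (a, b)) standing for
   (z, sum_j a_j x_j + sum_j b_j f_j); P = R^m (row vectors, basis x_j),
   P^* identified with R^m via the dual basis f_j, so g(y) = sum_j g_j y_j. *)
Definition MType := (Q * ('rV[R]_m * 'rV[R]_m))%type.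

Definition pairing (g y : 'rV[R]_m) : R := \sum_(j < m) g 0 j * y 0 j.

Definition half : R := (2 : R)^-1.

(* DSER transformation E_alpha, where alphas is alpha^* *)
Definition E_alpha (alpha : Q -> 'rV[R]_m) (alphas : 'rV[R]_m -> Q) (v : MType)
  : MType :=
  let: (z, (y, g)) := v in
  (z - alphas g, (y + alpha z - half *: alpha (alphas g), g)).

(* DSER transformation E^*_beta, where betas is beta^* *)
Definition Es_beta (beta : Q -> 'rV[R]_m) (betas : 'rV[R]_m -> Q) (v : MType)
  : MType :=
  let: (z, (y, g)) := v in
  (z - betas y, (y, g + beta z - half *: beta (betas y))).

Definition EO_gen (q : Q -> R) (s : MType -> MType) : Prop :=
  (exists (alpha : Q -> 'rV[R]_m) (alphas : 'rV[R]_m -> Q),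
     is_linear alpha /\
     (forall g z, polar q (alphas g) z = pairing g (alpha z)) /\
     s = E_alpha alpha alphas) \/
  (exists (beta : Q -> 'rV[R]_m) (betas : 'rV[R]_m -> Q),
     is_linear beta /\
     (forall y z, polar q (betas y) z = pairing (beta z) y) /\
     s = Es_beta beta betas).

Definition unitv (i : 'I_m) : 'rV[R]_m := delta_mx 0 i.

Definition E1 (q : Q -> R) (w : Q) (i : 'I_m) (v : MType) : MType :=
  let: (z, (a, b)) := v in
  (z - b 0 i *: w, (a + (polar q z w - b 0 i * q w) *: unitv i, b)).

Definition E2 (q : Q -> R) (w : Q) (i : 'I_m) (v : MType) : MType :=
  let: (z, (a, b)) := v in
  (z - a 0 i *: w, (a, b + (polar q z w - a 0 i * q w) *: unitv i)).

Definition ETrans_gen (q : Q -> R) (s : MType -> MType) : Prop :=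
  exists (w : Q) (i : 'I_m), s = E1 q w i \/ s = E2 q w i.

End Defs.

(* the subgroup of the group of bijections of T generated by a set S of
   bijections, taken up to extensional equality of maps *)
Inductive gen_group (T : Type) (S : (T -> T) -> Prop) : (T -> T) -> Prop :=
| gen_one : forall f, f =1 id -> gen_group S f
| gen_mul : forall s g f, S s -> gen_group S g -> f =1 s \o g -> gen_group S f
| gen_inv : forall s s' g f, S s -> cancel s s' -> cancel s' s ->
    gen_group S g -> f =1 s' \o g -> gen_group S f.

(* Each E1 w i is the DSER transformation E_alpha with alpha z = <w, z> x_i,
   and E2 w i is its conjugate by the swap (y, g) |-> (g, y), which likewise
   conjugates E_alpha into E^*_alpha.  Conversely, as z |-> <z, -> is onto Q^*
   and injective, every alpha has the form z |-> (<F i, z>)_i for a family F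
   of vectors of Q, and E_alpha = E_of F.  Writing [shear h] for the map adding
   h g to y, one has
     E_of F \o E_of H = shear (1/2 [F, H]) \o E_of (F + H),
     [E_of F, E_of H] = shear [F, H],
   with [F, H] bilinear; so 1/2 [F, H] = [F/2, H] is a commutator and E_of F
   is built from the E_of (single i (F i)) = E1 (F i) i. *)

From Pilot Require Import Defs.
From mathcomp Require Import all_boot all_order all_algebra.
From mathcomp Require Import ring.
Set Implicit Arguments. Unset Strict Implicit. Unset Printing Implicit Defensive.
Import GRing.Theory.
Local Open Scope ring_scope.

Section GeneratedGroup.
Variable T : Type.
Implicit Types (S : (T -> T) -> Prop) (f g h s c : T -> T).

Definition inv_closed S :=
  forall s, S s -> exists2 s', S s' & cancel s s' /\ cancel s' s.

Lemma gen_group_ext S f g : gen_group S f -> g =1 f -> gen_group S g.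
Proof.
case=> [f0 E|s g0 f0 Ss Gg E|s s' g0 f0 Ss sK s'K Gg E] Eg.
- by apply: gen_one => x; rewrite Eg E.
- by apply: (gen_mul Ss Gg) => x; rewrite Eg E.
- by apply: (gen_inv Ss sK s'K Gg) => x; rewrite Eg E.
Qed.

Lemma gen_group_gen S s : S s -> gen_group S s.
Proof. by move=> Ss; apply: (gen_mul Ss (@gen_one T S id (frefl _))). Qed.

Lemma gen_group_comp S f g : gen_group S f -> gen_group S g -> gen_group S (f \o g).
Proof.
move=> Gf Gg; elim: Gf => [f0 E|s h f0 Ss _ IH E|s s' h f0 Ss sK s'K _ IH E].
- by apply: gen_group_ext Gg _ => x /=; rewrite E.
- by apply: (gen_mul Ss IH) => x /=; rewrite E.
- by apply: (gen_inv Ss sK s'K IH) => x /=; rewrite E.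
Qed.

Lemma gen_group_inverse S f : inv_closed S -> gen_group S f ->
  exists2 f', gen_group S f' & cancel f f' /\ cancel f' f.
Proof.
move=> invS; elim=> [f0 E|s g f0 Ss _ [g' Gg' [gK g'K]] E
                    |s s' g f0 Ss sK s'K _ [g' Gg' [gK g'K]] E].
- by exists id; [apply: gen_one | split=> x /=; rewrite E].
- have [t St [sK tK]] := invS s Ss.
  exists (g' \o t); first by apply: gen_group_comp => //; apply: gen_group_gen.
  by split=> x /=; rewrite E /= ?sK ?gK // g'K tK.
- exists (g' \o s); first by apply: gen_group_comp => //; apply: gen_group_gen.
  by split=> x /=; rewrite E /= ?s'K ?gK // g'K sK.
Qed.

Lemma gen_group_divl S f g h : inv_closed S -> gen_group S f -> gen_group S h ->
  f \o g =1 h -> gen_group S g.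
Proof.
move=> invS Gf Gh E; have [f' Gf' [fK _]] := gen_group_inverse invS Gf.
by apply: gen_group_ext (gen_group_comp Gf' Gh) _ => x /=; rewrite -E /= fK.
Qed.

Lemma gen_group_divr S f g h : inv_closed S -> gen_group S f -> gen_group S h ->
  g \o f =1 h -> gen_group S g.
Proof.
move=> invS Gf Gh E; have [f' Gf' [_ f'K]] := gen_group_inverse invS Gf.
by apply: gen_group_ext (gen_group_comp Gh Gf') _ => x /=; rewrite -E /= f'K.
Qed.

Lemma gen_group_sub_gen S S' f : (forall s, S s -> exists2 s', S' s' & s' =1 s) ->
  gen_group S f -> gen_group S' f.
Proof.
move=> SS'; elim=> [f0 E|s g f0 Ss _ IH E|s s' g f0 Ss sK s'K _ IH E].
- exact: gen_one.
- have [t S't Et] := SS' s Ss.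
  by apply: (gen_mul S't IH) => x; rewrite E /= Et.
- have [t S't Et] := SS' s Ss.
  by apply: (gen_inv S't _ _ IH E) => x; rewrite ?Et ?sK ?s'K.
Qed.

Lemma gen_group_sub S S' f : inv_closed S' -> (forall s, S s -> gen_group S' s) ->
  gen_group S f -> gen_group S' f.
Proof.
move=> invS' SS'; elim=> [f0 E|s g f0 Ss _ IH E|s s' g f0 Ss sK s'K _ IH E].
- exact: gen_one.
- exact: gen_group_ext (gen_group_comp (SS' s Ss) IH) E.
- apply: gen_group_ext (gen_group_comp _ IH) E.
  exact: gen_group_divl invS' (SS' s Ss) (@gen_one _ S' id (frefl _)) s'K.
Qed.

Lemma gen_group_conj S S' c f : involutive c ->
  (forall s, S s -> exists2 s', S' s' & s' =1 c \o s \o c) ->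
  gen_group S f -> gen_group S' (c \o f \o c).
Proof.
move=> cK SS'; elim=> [f0 E|s g f0 Ss _ IH E|s s' g f0 Ss sK s'K _ IH E].
- by apply: gen_one => x /=; rewrite E cK.
- have [t S't Et] := SS' s Ss.
  by apply: (gen_mul S't IH) => x; rewrite /= E Et /= cK.
- have [t S't Et] := SS' s Ss.
  apply: (gen_inv (s' := c \o s' \o c) S't _ _ IH) => x /=.
  + by rewrite Et /= cK sK cK.
  + by rewrite Et /= cK s'K cK.
  + by rewrite E /= cK.
Qed.

End GeneratedGroup.

Section LinearMaps.
Variables (R : comUnitRingType) (U V : lmodType R).

Lemma is_linearD (f : U -> V) : is_linear f -> {morph f : x y / x + y}.
Proof. by move=> lin_f x y; rewrite -[x]scale1r lin_f !scale1r. Qed.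

Lemma is_linearB (f : U -> V) : is_linear f -> {morph f : x y / x - y}.
Proof. by move=> lin_f x y; rewrite addrC -scaleN1r lin_f scaleN1r addrC. Qed.

Lemma is_linear0 (f : U -> V) : is_linear f -> f 0 = 0.
Proof. by move=> lin_f; rewrite -(subrr 0) is_linearB // subrr. Qed.

Lemma is_linearN (f : U -> V) : is_linear f -> {morph f : x / - x}.
Proof. by move=> lin_f x; rewrite -sub0r is_linearB // is_linear0 // sub0r. Qed.

Lemma is_linearZ (f : U -> V) : is_linear f -> forall a, {morph f : x / a *: x}.
Proof. by move=> lin_f a x; rewrite -[a *: x]addr0 lin_f is_linear0 // addr0. Qed.

Lemma is_lfunD (f : U -> R) : is_lfun f -> {morph f : x y / x + y}.
Proof. by move=> lin_f x y; rewrite -[x]scale1r lin_f scale1r mul1r. Qed.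

Lemma is_lfunB (f : U -> R) : is_lfun f -> {morph f : x y / x - y}.
Proof. by move=> lin_f x y; rewrite addrC -scaleN1r lin_f mulN1r addrC. Qed.

Lemma is_lfun0 (f : U -> R) : is_lfun f -> f 0 = 0.
Proof. by move=> lin_f; rewrite -(subrr 0) is_lfunB // subrr. Qed.

Lemma is_lfunZ (f : U -> R) : is_lfun f -> forall a x, f (a *: x) = a * f x.
Proof. by move=> lin_f a x; rewrite -[a *: x]addr0 lin_f is_lfun0 // addr0. Qed.

Lemma is_lfun_sum (f : U -> R) n (c : 'I_n -> R) (v : 'I_n -> U) :
  is_lfun f -> f (\sum_i c i *: v i) = \sum_i c i * f (v i).
Proof.
move=> lin_f; rewrite (big_morph f (is_lfunD lin_f) (is_lfun0 lin_f)).
by apply: eq_bigr => i _; rewrite is_lfunZ.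
Qed.

End LinearMaps.

Lemma pairingC (R : comUnitRingType) m (g y : 'rV[R]_m) : pairing g y = pairing y g.
Proof. by apply: eq_bigr => i _; rewrite mulrC. Qed.

Section DSER.
Variables (R : comUnitRingType) (Q : lmodType R) (q : Q -> R) (m : nat).
Hypothesis two_unit : (2 : R) \is a GRing.unit.
Hypothesis q_quad : is_quadratic_form q.

Local Notation M := (MType Q m).
Local Notation half := (Defs.half R).
Local Notation G := (gen_group (ETrans_gen (m := m) q)).

Lemma mulr_half2 (x : R) : half * (2 * x) = x.
Proof. by rewrite mulrA mulVr // mul1r. Qed.

Lemma mulr_halfDB (a b : R) : half * (a + b) - a = half * (b - a).
Proof. by rewrite -{2}[a]mulr_half2; ring. Qed.

Lemma polar_lfunl y : is_lfun (polar q ^~ y). Proof. exact: q_quad.2.1. Qed.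
Lemma polar_lfunr x : is_lfun (polar q x). Proof. exact: q_quad.2.2. Qed.

Lemma polarC x y : polar q x y = polar q y x.
Proof. by rewrite /polar [y + x]addrC; ring. Qed.

Lemma polarxx w : polar q w w = 2 * q w.
Proof. by rewrite /polar -[w + w]/(w *+ 2) -scaler_nat q_quad.1; ring. Qed.

Definition shear (h : 'rV[R]_m -> 'rV[R]_m) (v : M) : M :=
  let: (z, (y, g)) := v in (z, (y + h g, g)).

Lemma shear_ext h k : h =1 k -> shear h =1 shear k.
Proof. by move=> E [z [y g]]; rewrite /shear E. Qed.

Lemma shear_comp h k : shear h \o shear k =1 shear (h \+ k).
Proof. by case=> z [y g]; rewrite /shear /= addrA [_ + h g]addrAC. Qed.

Lemma shear_id h : h =1 (fun _ => 0) -> shear h =1 id.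
Proof. by move=> h0 [z [y g]]; rewrite /shear h0 addr0. Qed.

Lemma E_alpha_ext (al al' : Q -> 'rV[R]_m) (als als' : 'rV[R]_m -> Q) :
  al =1 al' -> als =1 als' -> E_alpha al als =1 E_alpha al' als'.
Proof. by move=> Eal Eals [z [y g]]; rewrite /E_alpha !Eal !Eals. Qed.

Lemma E_alpha_comp (al be : Q -> 'rV[R]_m) (als bes : 'rV[R]_m -> Q) :
  is_linear al -> is_linear be ->
  E_alpha al als \o E_alpha be bes =1
  shear (fun g => half *: (al (bes g) + be (als g)) - al (bes g))
    \o E_alpha (al \+ be) (als \+ bes).
Proof.
move=> lin_al lin_be [z [y g]]; rewrite /E_alpha /shear /=.
congr (_, (_, _)); first by rewrite opprD addrA addrAC.
rewrite (is_linearB lin_al) !(is_linearD lin_al) !(is_linearD lin_be).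
by apply/rowP => j; rewrite !mxE; ring.
Qed.

Implicit Types F H : {ffun 'I_m -> Q}.

Definition alpha_of F (z : Q) : 'rV[R]_m := \row_i polar q (F i) z.
Definition alphas_of F (g : 'rV[R]_m) : Q := \sum_i g 0 i *: F i.
Definition E_of F : M -> M := E_alpha (alpha_of F) (alphas_of F).

Lemma alpha_of_linearr F : is_linear (alpha_of F).
Proof. by move=> a x y; apply/rowP => i; rewrite !mxE (polar_lfunr (F i)). Qed.

Lemma alphas_of_adjoint F g z : polar q (alphas_of F g) z = pairing g (alpha_of F z).
Proof.
rewrite /alphas_of (is_lfun_sum _ _ (polar_lfunl z)).
by apply: eq_bigr => i _; rewrite mxE.
Qed.

Lemma alpha_of_linearl z : is_linear (alpha_of ^~ z).
Proof. by move=> a F H; apply/rowP => i; rewrite !mxE !ffunE (polar_lfunl z). Qed.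

Lemma alphas_of_linearl g : is_linear (alphas_of ^~ g).
Proof.
move=> a F H; rewrite /alphas_of scaler_sumr -big_split.
by apply: eq_bigr => i _; rewrite !ffunE scalerDr !scalerA mulrC.
Qed.

Lemma E_of0 : E_of 0 =1 id.
Proof.
case=> z [y g]; rewrite /E_of /E_alpha (is_linear0 (alphas_of_linearl g)).
by rewrite !(is_linear0 (alpha_of_linearl _)) subr0 scaler0 !addr0 subr0.
Qed.

Definition comm_of F H (g : 'rV[R]_m) : 'rV[R]_m :=
  alpha_of H (alphas_of F g) - alpha_of F (alphas_of H g).

Lemma comm_ofZl a F H g : comm_of (a *: F) H g = a *: comm_of F H g.
Proof.
rewrite /comm_of (is_linearZ (alphas_of_linearl g)).
by rewrite (is_linearZ (alpha_of_linearl _)) (is_linearZ (alpha_of_linearr H)) scalerBr.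
Qed.

Lemma E_ofD F H :
  E_alpha (alpha_of F \+ alpha_of H) (alphas_of F \+ alphas_of H) =1 E_of (F + H).
Proof.
apply: E_alpha_ext => [z|g] /=; first by rewrite (is_linearD (alpha_of_linearl z)).
by rewrite (is_linearD (alphas_of_linearl g)).
Qed.

Lemma E_of_comp F H : E_of F \o E_of H =1 shear (half \*: comm_of F H) \o E_of (F + H).
Proof.
move=> v; rewrite [RHS]/= -E_ofD /E_of.
rewrite (E_alpha_comp _ _ (alpha_of_linearr F) (alpha_of_linearr H)) /=.
apply: shear_ext => g /=; rewrite /comm_of; apply/rowP => j; rewrite !mxE.
by rewrite mulr_halfDB.
Qed.

Lemma E_of_commute F H : E_of F \o E_of H =1 shear (comm_of F H) \o (E_of H \o E_of F).
Proof.
move=> v; have /= EFH := E_of_comp F H v; have /= EHF := E_of_comp H F v.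
rewrite /= EFH EHF addrC -[RHS]/((shear _ \o shear _) _) shear_comp.
apply: shear_ext => g /=; rewrite /comm_of; apply/rowP => j; rewrite !mxE.
by rewrite -opprB mulrN -{2}(mulr_half2 (_ - _)); ring.
Qed.

Lemma E_ofK F : cancel (E_of F) (E_of (- F)).
Proof.
move=> v; rewrite -[E_of (- F) _]/((E_of _ \o E_of _) v) E_of_comp /= addNr E_of0.
apply: shear_id => g /=; rewrite /comm_of.
rewrite (is_linearN (alphas_of_linearl g)) (is_linearN (alpha_of_linearl _)).
by rewrite (is_linearN (alpha_of_linearr F)) subrr scaler0.
Qed.

Definition single (i : 'I_m) (w : Q) : {ffun 'I_m -> Q} :=
  [ffun j => if j == i then w else 0].

Lemma single_sum F : F = \sum_i single i (F i).
Proof.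
apply/ffunP => j; rewrite sum_ffunE (bigD1 j) //= big1 => [|i /negbTE ji].
  by rewrite !ffunE eqxx addr0.
by rewrite ffunE eq_sym ji.
Qed.

Lemma singleZ a i w : a *: single i w = single i (a *: w).
Proof. by apply/ffunP => j; rewrite !ffunE; case: eqP; rewrite ?scaler0. Qed.

Lemma singleN i w : single i (- w) = - single i w.
Proof. by rewrite -scaleN1r -singleZ scaleN1r. Qed.

Lemma alphas_of_single i w g : alphas_of (single i w) g = g 0 i *: w.
Proof.
rewrite /alphas_of (bigD1 i) //= big1 => [|j /negbTE ji].
  by rewrite ffunE eqxx addr0.
by rewrite ffunE ji scaler0.
Qed.

Lemma E1_E_of w i : E1 q w i =1 E_of (single i w).
Proof.
case=> z [a b]; rewrite /E1 /E_of /E_alpha alphas_of_single.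
congr (_, (_, _)); apply/rowP => j; rewrite !mxE !ffunE eqxx /=.
have [->|_] := eqVneq j i; last by rewrite /= !(is_lfun0 (polar_lfunl _)); ring.
rewrite /= (is_lfunZ (polar_lfunr w)) polarxx polarC mulrCA mulr_half2; ring.
Qed.

Lemma E1K w (i : 'I_m) : cancel (E1 q w i) (E1 q (- w) i).
Proof. by move=> v; rewrite !E1_E_of singleN E_ofK. Qed.

Definition swap (v : M) : M := let: (z, (y, g)) := v in (z, (g, y)).

Lemma swapK : involutive swap. Proof. by case=> z [y g]. Qed.

Lemma E2_swap w (i : 'I_m) : E2 q w i =1 swap \o E1 q w i \o swap.
Proof. by case=> z [y g]. Qed.

Lemma Es_beta_swap (be : Q -> 'rV[R]_m) (bes : 'rV[R]_m -> Q) :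
  Es_beta be bes =1 swap \o E_alpha be bes \o swap.
Proof. by case=> z [y g]. Qed.

Lemma E2K w (i : 'I_m) : cancel (E2 q w i) (E2 q (- w) i).
Proof. by move=> v; rewrite !E2_swap /= swapK E1K swapK. Qed.

Lemma ETrans_inv_closed : inv_closed (ETrans_gen (m := m) q).
Proof.
move=> s [w [i [->|->]]].
- exists (E1 q (- w) i); first by exists (- w), i; left.
  by split; [exact: E1K | have := E1K (- w) i; rewrite opprK].
- exists (E2 q (- w) i); first by exists (- w), i; right.
  by split; [exact: E2K | have := E2K (- w) i; rewrite opprK].
Qed.

Lemma ETrans_swap_conj f : G f -> G (swap \o f \o swap).
Proof.
apply: gen_group_conj swapK _ => s [w [i [->|->]]].
- by exists (E2 q w i); [exists w, i; right | exact: E2_swap].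
- exists (E1 q w i); first by exists w, i; left.
  by move=> v; rewrite /= E2_swap /= !swapK.
Qed.

Lemma shear_comm_in_ETrans F H : G (E_of F) -> G (E_of H) -> G (shear (comm_of F H)).
Proof.
move=> GF GH; apply: (gen_group_divr ETrans_inv_closed (gen_group_comp GH GF)).
  exact: gen_group_comp GF GH.
by move=> v; rewrite E_of_commute.
Qed.

Lemma E_ofD_in_ETrans F H :
  G (E_of (half *: F)) -> G (E_of F) -> G (E_of H) -> G (E_of (F + H)).
Proof.
move=> GhF GF GH; have Gsh : G (shear (half \*: comm_of F H)).
  apply: gen_group_ext (shear_comm_in_ETrans GhF GH) _.
  by apply: shear_ext => g; rewrite comm_ofZl.
apply: (gen_group_divl ETrans_inv_closed Gsh (gen_group_comp GF GH)).
by move=> v; rewrite E_of_comp.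
Qed.

Lemma E_of_in_ETrans F : G (E_of F).
Proof.
suff /(_ 1) : forall a, G (E_of (a *: F)) by rewrite scale1r.
rewrite [F]single_sum; apply: (big_ind (fun F => forall a, G (E_of (a *: F)))).
- by move=> a; rewrite scaler0; apply: gen_one; exact: E_of0.
- move=> F1 F2 G1 G2 a; rewrite scalerDr.
  by apply: E_ofD_in_ETrans; rewrite ?scalerA.
- move=> i _ a; rewrite singleZ.
  apply: gen_group_ext (gen_group_gen _) (fun v => esym (E1_E_of _ _ v)).
  by exists (a *: F i), i; left.
Qed.

Lemma ETrans_gen_EO (s : M -> M) :
  ETrans_gen q s -> exists2 s', EO_gen q s' & s' =1 s.
Proof.
have lin := alpha_of_linearr; have adj := alphas_of_adjoint.
case=> w [i [->|->]].
- exists (E_of (single i w)); last by move=> v; rewrite E1_E_of.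
  by left; exists (alpha_of (single i w)), (alphas_of (single i w)).
- exists (Es_beta (alpha_of (single i w)) (alphas_of (single i w))).
    right; exists (alpha_of (single i w)), (alphas_of (single i w)).
    split; first exact: lin.
    by split => // y z; rewrite adj pairingC.
  by move=> v; rewrite Es_beta_swap E2_swap /= E1_E_of.
Qed.

Hypothesis polar_nondeg : forall z, (forall y, polar q z y = 0) -> z = 0.
Hypothesis polar_onto :
  forall f : Q -> R, is_lfun f -> exists z, forall y, polar q z y = f y.

Lemma E_alpha_eq_E_of (al : Q -> 'rV[R]_m) (als : 'rV[R]_m -> Q) :
  is_linear al -> (forall g z, polar q (als g) z = pairing g (al z)) ->
  exists F, E_alpha al als =1 E_of F.
Proof.
move=> lin_al adj.
have /fin_all_exists [F0 F0E] : forall i, exists w, forall y, polar q w y = al y 0 i.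
  by move=> i; apply: polar_onto => a x y; rewrite lin_al !mxE.
pose F := [ffun i => F0 i]; exists F.
have alE : al =1 alpha_of F by move=> z; apply/rowP => i; rewrite !mxE ffunE F0E.
apply: E_alpha_ext => // g; apply/eqP; rewrite -subr_eq0; apply/eqP.
apply: polar_nondeg => y.
by rewrite (is_lfunB (polar_lfunl y)) adj alphas_of_adjoint alE subrr.
Qed.

Lemma EO_gen_in_ETrans (s : M -> M) : EO_gen q s -> G s.
Proof.
case=> [[al [als [lin_al [adj ->]]]] | [be [bes [lin_be [adj ->]]]]].
  have [F EF] := E_alpha_eq_E_of lin_al adj.
  exact: gen_group_ext (E_of_in_ETrans F) EF.
have [|F EF] := E_alpha_eq_E_of lin_be (als := bes).
  by move=> y z; rewrite adj pairingC.
apply: gen_group_ext (ETrans_swap_conj (E_of_in_ETrans F)) _.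
by move=> v; rewrite Es_beta_swap /= EF.
Qed.

End DSER.

Theorem mainTheorem2 (R : comUnitRingType) (Q : lmodType R) (q : Q -> R)
  (m : nat) :
  (2 : R) \is a GRing.unit ->
  quadratic_space q ->
  (0 < m)%N ->
  forall f : MType Q m -> MType Q m,
    gen_group (EO_gen q) f <-> gen_group (ETrans_gen q) f.
Proof.
move=> two_unit [_ [q_quad [nondeg onto]]] _ f; split.
- apply: gen_group_sub (ETrans_inv_closed two_unit q_quad) _.
  exact: EO_gen_in_ETrans.
- by apply: gen_group_sub_gen; exact: ETrans_gen_EO.
Qed.
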